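(* Let $h>0$ and let $T^{\rm H}=\left[-\frac{\pi}{2},\frac{3\pi}{2}\right)^2\setminus\left[-\frac{\pi}{2},\frac{\pi}{2}\right)^2$. Let $\widetilde{A}_h(\boldsymbol\theta)=\frac{2}{h^2}(2-\cos\theta_1-\cos\theta_2)$ be the symbol of the 2D 5-point Laplacian stencil $\frac{1}{h^2}\begin{bmatrix} & -1 & \\ -1 & 4 & -1\\ & -1 & \end{bmatrix}$. For $\alpha,\beta,\gamma\in\mathbb R$ let $\Upsilon(\alpha,\beta,\gamma)=h^2\begin{bmatrix}\gamma&\beta&\gamma\\ \beta&\alpha&\beta\\ \gamma&\beta&\gamma\end{bmatrix}$ be the symmetric 9-point stencil with symbol $\widetilde{\Upsilon}(\boldsymbol\theta)=h^2(\alpha+2\beta\cos\theta_1+2\beta\cos\theta_2+4\gamma\cos\theta_1\cos\theta_2)$, and for $\omega\in\mathbb R$ define the smoothing factor $$\mu_{\rm loc}(\alpha,\beta,\gamma,\omega)=\max_{\boldsymbol\theta\in T^{\rm H}}\left|1-\omega\,\widetilde{A}_h(\boldsymbol\theta)\widetilde{\Upsilon}(\boldsymbol\theta)\right|.$$ Then among all symmetric 9-point stencils of the form $\Upsilon(\alpha,\beta,\gamma)$, the SPAI smoother $M_9=\frac{1}{24}\Upsilon(44,10,3)$ gives the optimal smoothing factor: $\min_{\alpha,\beta,\gamma,\omega\in\mathbb R}\mu_{\rm loc}(\alpha,\beta,\gamma,\omega)=\frac{9+8\sqrt{10}}{215}\approx0.1595$, and this minimum is attained for $(\alpha,\beta,\gamma)=(\frac{44}{24},\frac{10}{24},\frac{3}{24})$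 with the optimal relaxation parameter $\omega_{\rm opt}=\frac{309-12\sqrt{10}}{1720}\approx0.1576$.
   Context: This concerns the smoother (relaxation) $u^{k+1}=u^k+\omega M(b-Au^k)$ for the standard 5-point finite difference discretization $A_h$ of $-\Delta$ with mesh size $h$ in 2D, with relaxation error operator $I-\omega MA_h$. Its local Fourier (LFA) smoothing factor is the maximum over the high-frequency set $T^{\rm H}$ (for standard coarsening) of the modulus of the symbol $1-\omega\widetilde{A}_h(\boldsymbol\theta)\widetilde{M}(\boldsymbol\theta)$, where $\widetilde{M}$ is the symbol of the stencil $M$; the optimal smoothing factor is the minimum of this over the free parameters. *)

From mathcomp Require Import all_boot all_order all_algebra.
From mathcomp Require Import all_classical all_reals all_analysis.
Set Implicit Arguments. Unset Strict Implicit. Unset Printing Implicit Defensive.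
Import Order.TTheory GRing.Theory Num.Theory.
Local Open Scope classical_set_scope.
Local Open Scope ring_scope.

Section Defs.
Variable R : realType.

Definition in_half_open (a b t : R) : Prop := a <= t /\ t < b.

Definition THigh : set (R * R) :=
  [set th | in_half_open (- (pi / 2)) (3 * pi / 2) th.1 /\
            in_half_open (- (pi / 2)) (3 * pi / 2) th.2 /\
            ~ (in_half_open (- (pi / 2)) (pi / 2) th.1 /\
               in_half_open (- (pi / 2)) (pi / 2) th.2)].

Definition symA (h : R) (th : R * R) : R :=
  2 / h ^+ 2 * (2 - cos th.1 - cos th.2).

Definition symUps (h a b g : R) (th : R * R) : R :=
  h ^+ 2 * (a + 2 * b * cos th.1 + 2 * b * cos th.2 + 4 * g * cos th.1 * cos th.2).

Definition mu_loc (h a b g w : R) : R :=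
  sup [set `|1 - w * symA h th * symUps h a b g th| | th in THigh].

End Defs.

(* With x = cos th1 and y = cos th2, the high frequencies become the points of
   [-1,1]^2 with x <= 0 or y <= 0, and w * symA * symUps becomes
   2 w (2 - x - y) (a + 2 b x + 2 b y + 4 g x y), in which h cancels.

   Lower bound: for every u in [1, 2], a combination with nonnegative weights of
   the values of this product at (-1,-1), (1,0) and (1,-1) equals its value at
   (1-u, 1-u), whatever a, b, g.  The weights add up to
   W(u) = 3u^3/8 - 2u^2 + 3u, so if the four amplification factors lie in
   [-m, m] then W(u) - 1 <= (W(u) + 1) m.

   Upper bound: for the SPAI stencil the product is w/3 times
   P(x,y) = (2 - x - y)(11 + 5x + 5y + 3xy), which equals 16 at the three
   corner points above and 16 W(u) at (1-u, 1-u).  On the high frequencies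
   16 <= P <= 16 W(u0), where u0 = (16 - 2 sqrt 10)/9 is the critical point of W
   (W'(u) = (9u^2 - 32u + 24)/8), so w = 3/(8(W(u0) + 1)) equioscillates and
   attains the lower bound (W(u0) - 1)/(W(u0) + 1). *)

From mathcomp Require Import all_boot all_order all_algebra.
From mathcomp Require Import all_classical all_reals all_analysis.
From mathcomp Require Import ring lra.
Import Order.TTheory GRing.Theory Num.Theory.
Local Open Scope classical_set_scope.
Local Open Scope ring_scope.

Set Implicit Arguments.
Unset Strict Implicit.

Section SmoothingFactor.
Variable R : realType.

Definition cos_high : set (R * R) :=
  [set p | -1 <= p.1 <= 1 /\ -1 <= p.2 <= 1 /\ (p.1 <= 0 \/ p.2 <= 0)].

Lemma cos_le0 (t : R) : pi / 2 <= t -> t < 3 * pi / 2 -> cos t <= 0.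
Proof.
move=> t1 t2; rewrite -(subrK pi t) cosDpi oppr_le0.
by apply: cos_ge0_pihalf; apply/andP; split; lra.
Qed.

Lemma acos_ge_pihalf (x : R) : -1 <= x <= 0 -> pi / 2 <= acos x.
Proof.
move=> /andP[x1 x0]; rewrite leNgt; apply/negP => lt_pihalf.
have x_itv : x \in `[-1, 1] by rewrite in_itv /=; apply/andP; split; lra.
have : 0 < cos (acos x).
  apply: cos_gt0_pihalf; apply/andP; split => //.
  by have := acos_ge0 (x_itv : -1 <= x <= 1); have := pi_gt0 R; lra.
by rewrite acosK //; lra.
Qed.

Lemma THigh_cos_image :
  (fun th => (cos th.1, cos th.2)) @` @THigh R = cos_high.
Proof.
have hpi := pi_gt0 R.
apply/seteqP; split => [_ [th [[t1 t1'] [[t2 t2'] t_low]] <-]|[x y]].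
  rewrite /cos_high /= !cos_le1 !cos_geN1; split=> //; split=> //.
  case: (ltP th.1 (pi / 2)) => th1; last by left; apply: cos_le0.
  right; apply: cos_le0 => //; rewrite leNgt; apply/negP => th2.
  by apply: t_low; split; split.
move=> [/= x_itv [y_itv x0_y0]].
have acos_range (z : R) : -1 <= z <= 1 ->
    in_half_open (- (pi / 2)) (3 * pi / 2) (acos z).
  move=> z_itv; have := acos_ge0 z_itv; have := acos_lepi z_itv.
  by move=> ? ?; split; lra.
exists (acos x, acos y); last by rewrite /= !acosK.
split; first exact: acos_range.
split; first exact: acos_range.
move=> [[_ /= lt1] [_ /= lt2]].
case/andP: x_itv => x1 _; case/andP: y_itv => y1 _.
case: x0_y0 => [x0|y0].
  by have := @acos_ge_pihalf x; rewrite x1 x0; lra.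
by have := @acos_ge_pihalf y; rewrite y1 y0; lra.
Qed.

Definition lfa_symbol (a b g w x y : R) : R :=
  1 - 2 * w * ((2 - x - y) * (a + 2 * b * x + 2 * b * y + 4 * g * x * y)).

Definition mu_cos (a b g w : R) : R :=
  sup [set `|lfa_symbol a b g w p.1 p.2| | p in cos_high].

Lemma mu_locE (h a b g w : R) : 0 < h -> mu_loc h a b g w = mu_cos a b g w.
Proof.
move=> h0; rewrite /mu_loc /mu_cos -THigh_cos_image image_comp.
congr sup; apply: eq_imagel => th _ /=; congr `|_|.
by rewrite /lfa_symbol /symA /symUps; field; rewrite gt_eqF.
Qed.

Lemma norm_mulr_le1 (c z : R) : `|z| <= 1 -> `|c * z| <= `|c|.
Proof. by move=> z1; rewrite normrM ler_piMr. Qed.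

Lemma norm_stencil_le (a b g x y : R) : `|x| <= 1 -> `|y| <= 1 ->
  `|a + 2 * b * x + 2 * b * y + 4 * g * x * y| <= `|a| + 4 * `|b| + 4 * `|g|.
Proof.
move=> x1 y1.
have := norm_mulr_le1 (2 * b) x1; have := norm_mulr_le1 (2 * b) y1.
have := norm_mulr_le1 (4 * g * x) y1; have := norm_mulr_le1 (4 * g) x1.
have := ler_normD (a + 2 * b * x + 2 * b * y) (4 * g * x * y).
have := ler_normD (a + 2 * b * x) (2 * b * y); have := ler_normD a (2 * b * x).
rewrite !normrM !normr_nat; lra.
Qed.

Lemma has_sup_lfa_symbol (a b g w : R) :
  has_sup [set `|lfa_symbol a b g w p.1 p.2| | p in cos_high].
Proof.
split.
  exists `|lfa_symbol a b g w (-1) (-1)|; exists (-1, -1) => //.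
  by rewrite /cos_high /=; split; lra.
exists (1 + 2 * `|w| * (4 * (`|a| + 4 * `|b| + 4 * `|g|))).
move=> _ [[x y] [/= x_itv [y_itv _]] <-] /=.
have x1 : `|x| <= 1 by rewrite ler_norml.
have y1 : `|y| <= 1 by rewrite ler_norml.
have lap4 : `|2 - x - y| <= 4.
  by rewrite ler_norml; case/andP: x_itv; case/andP: y_itv; lra.
apply: (le_trans (ler_normB _ _)); rewrite normr1 lerD2l !normrM normr_nat.
by rewrite ler_wpM2l ?mulr_ge0 // ler_pM // norm_stencil_le.
Qed.

Definition weight_sum (u : R) : R := 3 / 8 * u ^+ 3 - 2 * u ^+ 2 + 3 * u.

Lemma lfa_symbol_interpolation (a b g w u : R) :
  u ^+ 3 / 8 * lfa_symbol a b g w (-1) (-1)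
  + u * (u - 2) ^+ 2 * lfa_symbol a b g w 1 0
  + u * (3 * u / 2 - 1) * (1 - u / 2) * lfa_symbol a b g w 1 (-1)
  - lfa_symbol a b g w (1 - u) (1 - u) = weight_sum u - 1.
Proof. by rewrite /lfa_symbol /weight_sum; field. Qed.

Lemma mu_cos_ge_weight_sum (a b g w u : R) : 1 <= u <= 2 ->
  (weight_sum u - 1) / (weight_sum u + 1) <= mu_cos a b g w.
Proof.
move=> /andP[u1 u2]; set m := mu_cos a b g w.
have le_m x y : cos_high (x, y) -> `|lfa_symbol a b g w x y| <= m.
  by move=> xy; apply: sup_upper_bound (has_sup_lfa_symbol a b g w) _ _; exists (x, y).
have /le_m/ler_normlP[_ v1] : cos_high (-1, -1) by rewrite /cos_high /=; split; lra.
have /le_m/ler_normlP[_ v2] : cos_high (1, 0) by rewrite /cos_high /=; split; lra.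
have /le_m/ler_normlP[_ v3] : cos_high (1, -1) by rewrite /cos_high /=; split; lra.
have /le_m/ler_normlP[v4 _] : cos_high (1 - u, 1 - u).
  by rewrite /cos_high /=; split; lra.
have l1 : 0 <= u ^+ 3 / 8 by rewrite divr_ge0 ?exprn_ge0 //; lra.
have l2 : 0 <= u * (u - 2) ^+ 2 by rewrite mulr_ge0 ?sqr_ge0 //; lra.
have l3 : 0 <= u * (3 * u / 2 - 1) * (1 - u / 2) by rewrite !mulr_ge0 //; lra.
have := ler_wpM2l l1 v1; have := ler_wpM2l l2 v2; have := ler_wpM2l l3 v3.
have := lfa_symbol_interpolation a b g w u.
have -> : weight_sum u
    = u ^+ 3 / 8 + u * (u - 2) ^+ 2 + u * (3 * u / 2 - 1) * (1 - u / 2).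
  by rewrite /weight_sum; field.
by move=> *; rewrite ler_pdivrMr; lra.
Qed.

Definition spai_poly (x y : R) : R :=
  (2 - x - y) * (11 + 5 * x + 5 * y + 3 * x * y).

Lemma lfa_symbol_spai (w x y : R) :
  lfa_symbol (44 / 24) (10 / 24) (3 / 24) w x y = 1 - w / 3 * spai_poly x y.
Proof. by rewrite /lfa_symbol /spai_poly; field. Qed.

Lemma spai_polyC (x y : R) : spai_poly x y = spai_poly y x.
Proof. by rewrite /spai_poly; ring. Qed.

Lemma spai_poly_ge16 (x y : R) :
  -1 <= x <= 1 -> -1 <= y <= 0 -> 16 <= spai_poly x y.
Proof.
move=> /andP[x1 x2] /andP[y1 y2]; rewrite -subr_ge0.
have -> : spai_poly x y - 16 = (5 + 3 * y) * (1 - x) * (1 + x)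
    + (1 - y) * (1 + y) * (1 - x) + 4 * (- y) * (1 + x) * (1 + y).
  by rewrite /spai_poly; ring.
have t1 : 0 <= (5 + 3 * y) * (1 - x) * (1 + x) by rewrite !mulr_ge0 //; lra.
have t2 : 0 <= (1 - y) * (1 + y) * (1 - x) by rewrite !mulr_ge0 //; lra.
have t3 : 0 <= 4 * (- y) * (1 + x) * (1 + y) by rewrite !mulr_ge0 //; lra.
by rewrite !addr_ge0.
Qed.

Lemma spai_poly_ge16_cos_high (p : R * R) : cos_high p -> 16 <= spai_poly p.1 p.2.
Proof.
case: p => x y [/= x_itv [y_itv [x0|y0]]].
  by rewrite spai_polyC spai_poly_ge16 // (andP x_itv).1.
by rewrite spai_poly_ge16 // (andP y_itv).1.
Qed.

Lemma spai_poly_diag (t : R) : spai_poly (1 - t) (1 - t) = 16 * weight_sum t.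
Proof. by rewrite /spai_poly /weight_sum; field. Qed.

Lemma spai_poly_le_diag (x y : R) : x + y <= 2 ->
  spai_poly x y <= spai_poly ((x + y) / 2) ((x + y) / 2).
Proof.
move=> s2.
have -> : spai_poly ((x + y) / 2) ((x + y) / 2)
    = spai_poly x y + 3 / 4 * (2 - x - y) * (x - y) ^+ 2.
  by rewrite /spai_poly; field.
by rewrite lerDl mulr_ge0 ?sqr_ge0 // mulr_ge0 //; lra.
Qed.

Lemma weight_sum_le_crit (u t : R) : 9 * u ^+ 2 - 32 * u + 24 = 0 -> u <= 4 / 3 ->
  0 <= t <= 2 -> weight_sum t <= weight_sum u.
Proof.
move=> crit u43 /andP[t0 t2]; rewrite -subr_ge0.
have -> : weight_sum u - weight_sum t
    = (t - u) ^+ 2 * (2 - 3 * u / 4 - 3 * t / 8)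
      - (t - u) * (9 * u ^+ 2 - 32 * u + 24) / 8.
  by rewrite /weight_sum; field.
by rewrite crit mulr0 mul0r subr0 mulr_ge0 ?sqr_ge0 //; lra.
Qed.

Lemma spai_poly_le (u x y : R) : 9 * u ^+ 2 - 32 * u + 24 = 0 -> u <= 4 / 3 ->
  -1 <= x <= 1 -> -1 <= y <= 1 -> spai_poly x y <= 16 * weight_sum u.
Proof.
move=> crit u43 /andP[x1 x2] /andP[y1 y2].
apply: (le_trans (spai_poly_le_diag _)); first lra.
rewrite -[(x + y) / 2](subKr 1) spai_poly_diag ler_pM2l //.
by apply: weight_sum_le_crit => //; apply/andP; split; lra.
Qed.

Lemma norm_equioscillation (P W : R) : 16 <= P <= 16 * W ->
  `|1 - P / (8 * (W + 1))| <= (W - 1) / (W + 1).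
Proof.
move=> /andP[P16 P16W]; have W1 : 0 < W + 1 by lra.
have upper : (W - 1) / (W + 1) - (1 - P / (8 * (W + 1))) = (P - 16) / (8 * (W + 1)).
  by field; rewrite gt_eqF.
have lower : 1 - P / (8 * (W + 1)) + (W - 1) / (W + 1) = (16 * W - P) / (8 * (W + 1)).
  by field; rewrite gt_eqF.
rewrite ler_norml -subr_ge0 opprK lower -[_ <= (W - 1) / _]subr_ge0 upper.
by rewrite !divr_ge0 ?subr_ge0 //; lra.
Qed.

Lemma mu_cos_spai (u : R) : 9 * u ^+ 2 - 32 * u + 24 = 0 -> u <= 4 / 3 ->
  mu_cos (44 / 24) (10 / 24) (3 / 24) (3 / (8 * (weight_sum u + 1)))
  = (weight_sum u - 1) / (weight_sum u + 1).
Proof.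
move=> crit u43; set W := weight_sum u; set w := 3 / (8 * (W + 1)).
have W1 : 1 <= W.
  have n1_itv : -1 <= (-1 : R) <= 1 by apply/andP; split; lra.
  by have := spai_poly_le crit u43 n1_itv n1_itv; rewrite /spai_poly -/W; lra.
have W1_neq0 : W + 1 != 0 by rewrite gt_eqF //; lra.
have lfaE x y : lfa_symbol (44 / 24) (10 / 24) (3 / 24) w x y
    = 1 - spai_poly x y / (8 * (W + 1)).
  by rewrite lfa_symbol_spai /w; field.
apply/eqP; rewrite eq_le; apply/andP; split.
  apply: ge_sup; first by case: (has_sup_lfa_symbol (44 / 24) (10 / 24) (3 / 24) w).
  move=> _ [[x y] xy_high <-] /=; rewrite lfaE; apply: norm_equioscillation.
  apply/andP; split; first exact: (spai_poly_ge16_cos_high xy_high).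
  by case: xy_high => /= x_itv [y_itv _]; exact: spai_poly_le.
apply: sup_upper_bound; first exact: has_sup_lfa_symbol.
exists (-1, -1); first by rewrite /cos_high /=; split; lra.
have -> : lfa_symbol (44 / 24) (10 / 24) (3 / 24) w (-1) (-1) = (W - 1) / (W + 1).
  by rewrite lfaE /spai_poly; field.
by rewrite ger0_norm // divr_ge0 //; lra.
Qed.

Lemma weight_sum_crit (u : R) : 9 * u ^+ 2 - 32 * u + 24 = 0 ->
  weight_sum u = (48 - 10 * u) / 27.
Proof.
move=> crit; have -> : weight_sum u
    = (48 - 10 * u) / 27 + (u / 24 - 2 / 27) * (9 * u ^+ 2 - 32 * u + 24).
  by rewrite /weight_sum; field.
by rewrite crit mulr0 addr0.
Qed.

Section OptimalParameters.
Variable r : R.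
Hypotheses (r_sqr : r ^+ 2 = 10) (r_ge0 : 0 <= r).

Definition u_opt : R := (16 - 2 * r) / 9.

Lemma root10_bounds : 3 <= r <= 7 / 2.
Proof. by have := r_sqr; have := r_ge0; move=> *; apply/andP; split; nra. Qed.

Lemma u_opt_crit : 9 * u_opt ^+ 2 - 32 * u_opt + 24 = 0.
Proof.
have -> : 9 * u_opt ^+ 2 - 32 * u_opt + 24 = 4 / 9 * (r ^+ 2 - 10).
  by rewrite /u_opt; field.
by rewrite r_sqr subrr mulr0.
Qed.

Lemma u_opt_bounds : 1 <= u_opt <= 4 / 3.
Proof.
have /andP[r3 r4] := root10_bounds.
by rewrite /u_opt; apply/andP; split; lra.
Qed.

Lemma weight_sum_u_opt : weight_sum u_opt = (272 + 20 * r) / 243.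
Proof. by rewrite weight_sum_crit ?u_opt_crit // /u_opt; field. Qed.

Lemma mu_opt_value :
  (weight_sum u_opt - 1) / (weight_sum u_opt + 1) = (9 + 8 * r) / 215.
Proof.
have /andP[r3 _] := root10_bounds; have r_pos : 0 < 515 + 20 * r by lra.
have -> : (weight_sum u_opt - 1) / (weight_sum u_opt + 1)
    = (29 + 20 * r) / (515 + 20 * r).
  by rewrite weight_sum_u_opt; field; rewrite gt_eqF.
apply/eqP; rewrite eqr_div ?(gt_eqF r_pos) ?pnatr_eq0 //; apply/eqP.
have -> : (9 + 8 * r) * (515 + 20 * r)
    = (29 + 20 * r) * 215 + 160 * (r ^+ 2 - 10) by ring.
by rewrite r_sqr subrr mulr0 addr0.
Qed.

Lemma omega_opt_value :
  3 / (8 * (weight_sum u_opt + 1)) = (309 - 12 * r) / 1720.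
Proof.
have /andP[r3 _] := root10_bounds; have r_pos : 0 < 515 + 20 * r by lra.
have -> : 3 / (8 * (weight_sum u_opt + 1)) = 729 / (8 * (515 + 20 * r)).
  by rewrite weight_sum_u_opt; field; rewrite gt_eqF.
apply/eqP; rewrite eqr_div ?mulf_neq0 ?(gt_eqF r_pos) ?pnatr_eq0 //; apply/eqP.
have -> : (309 - 12 * r) * (8 * (515 + 20 * r))
    = 729 * 1720 - 1920 * (r ^+ 2 - 10) by ring.
by rewrite r_sqr subrr mulr0 subr0.
Qed.
End OptimalParameters.
End SmoothingFactor.

Theorem theorem3p1 (R : realType) (h : R) (hpos : 0 < h) :
  (forall a b g w : R,
      (9 + 8 * Num.sqrt 10) / 215 <= mu_loc h a b g w) /\
  mu_loc h (44 / 24) (10 / 24) (3 / 24) ((309 - 12 * Num.sqrt 10) / 1720)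
    = (9 + 8 * Num.sqrt 10) / 215.
Proof.
have r_sqr : Num.sqrt (10 : R) ^+ 2 = 10 by rewrite sqr_sqrtr.
have r_ge0 : 0 <= Num.sqrt (10 : R) by exact: sqrtr_ge0.
have /andP[u1 u43] := u_opt_bounds r_sqr r_ge0.
split=> [a b g w|].
  rewrite mu_locE // -(mu_opt_value r_sqr r_ge0).
  by apply: mu_cos_ge_weight_sum; apply/andP; split; lra.
rewrite mu_locE // -(omega_opt_value r_sqr r_ge0) mu_cos_spai ?u_opt_crit //.
exact: mu_opt_value.
Qed.
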